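(* Let $n\ge 2$, $N=\binom n2$, and let $w=w_1\cdots w_N$ be a word in the alphabet $[n-1]$. Then $w_1w_2\cdots w_N$ is a 132-avoiding sorting network of $\mathfrak S_n$ if and only if the reversed word $w_Nw_{N-1}\cdots w_1$ is a 132-avoiding sorting network of $\mathfrak S_n$.
   Context: For $i\in[n-1]$ let $s_i=(i,i+1)\in\mathfrak S_n$ be the adjacent transposition, and let $w_0\in\mathfrak S_n$ be the reverse permutation $w_0(i)=n+1-i$. A sorting network (of $\mathfrak S_n$) is a word $w=w_1\cdots w_N$, $N=\binom n2$, in the alphabet $[n-1]$ with $s_{w_1}s_{w_2}\cdots s_{w_N}=w_0$ (necessarily a reduced word). Intermediate permutations are $\sigma_0=\mathrm{id}$ and $\sigma_k=s_{w_1}\cdots s_{w_k}$, where the product is formed from the left so that, in one-line notation, $\sigma_k$ is obtained from $\sigma_{k-1}$ by swapping the entries in positions $w_k$ and $w_k+1$. A sorting network is 132-avoiding if every $\sigma_k$, $k\in[N]$, avoids the pattern 132 (in one-line notation). *)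

(* Permutations of [n] are represented in one-line notation
   as sequences of naturals (values 1..n); positions are 1-based in the
   mathematical text and 0-based in [nth]. *)
From mathcomp Require Import all_boot.
Set Implicit Arguments. Unset Strict Implicit. Unset Printing Implicit Defensive.

(* Swap the entries in (1-based) positions i and i+1 of the one-line word s. *)
Definition swap_pos (s : seq nat) (i : nat) : seq nat :=
  [seq nth 0 s (if j == i.-1 then i else if j == i then i.-1 else j)
  | j <- iota 0 (size s)].

Definition id_perm (n : nat) : seq nat := iota 1 n.

Definition w0_perm (n : nat) : seq nat := rev (iota 1 n).

(* sigma_k = s_{w_1} ... s_{w_k}, obtained from the identity by successive
   position swaps *)
Definition inter_perm (n : nat) (w : seq nat) (k : nat) : seq nat :=
  foldl swap_pos (id_perm n) (take k w).

Definition avoids132 (s : seq nat) : bool :=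
  [forall i : 'I_(size s), forall j : 'I_(size s), forall k : 'I_(size s),
     ((i < j) && (j < k)) ==>
     ~~ ((nth 0 s i < nth 0 s k) && (nth 0 s k < nth 0 s j))].

Definition sorting_network (n : nat) (w : seq nat) : Prop :=
  [/\ size w = 'C(n, 2), all (fun a => 0 < a < n) w &
      inter_perm n w (size w) = w0_perm n].

Definition avoiding132_sorting_network (n : nat) (w : seq nat) : Prop :=
  sorting_network n w /\
  forall k, 1 <= k <= size w -> avoids132 (inter_perm n w k).

From mathcomp Require Import all_boot zify.
Set Implicit Arguments. Unset Strict Implicit. Unset Printing Implicit Defensive.

(* Reading the word backwards and complementing values (v |-> n+1-v) are
   related by sigma'_k = comp(sigma_(N-k)) for the intermediate permutations
   sigma' of the reversed word, because sigma_N = w0.  Since complementation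
   exchanges the patterns 132 and 312, it suffices to show that if all
   sigma_1, ..., sigma_N avoid 132, then all sigma_0, ..., sigma_(N-1) avoid 312.
   Counting inversions shows that each step of a sorting network swaps an
   ascent.  Hence a 312 occurrence in sigma_(j+1) comes from a 312 occurrence
   in sigma_j, unless the swap is the one moving its "3" and its "1" past each
   other, in which case sigma_j contains 132; going down to sigma_0 = id, which
   avoids 312, produces such a j >= 1. *)

Definition swap_index (i j : nat) : nat :=
  if j == i.-1 then i else if j == i then i.-1 else j.

Lemma swap_index_lt i j m : 0 < i < m -> j < m -> swap_index i j < m.
Proof. by rewrite /swap_index; (repeat case: ifP => /eqP ?); lia. Qed.

Lemma swap_index_pred i : swap_index i i.-1 = i.
Proof. by rewrite /swap_index eqxx. Qed.

Lemma swap_index_self i : 0 < i -> swap_index i i = i.-1.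
Proof. by move=> i_gt0; rewrite /swap_index eqxx ifN_eq //; apply/eqP; lia. Qed.

Lemma swap_index_out i j : j != i.-1 -> j != i -> swap_index i j = j.
Proof. by move=> /negPf j_neq_pred /negPf j_neq; rewrite /swap_index j_neq_pred j_neq. Qed.

Lemma swap_indexK i : 0 < i -> involutive (swap_index i).
Proof.
move=> i_gt0 j; have [->|j_neq_pred] := eqVneq j i.-1.
  by rewrite swap_index_pred swap_index_self.
have [->|j_neq] := eqVneq j i; first by rewrite swap_index_self // swap_index_pred.
by rewrite !swap_index_out.
Qed.

Lemma swap_index_mono i p q : 0 < i -> p < q -> ~~ ((p == i.-1) && (q == i)) ->
  swap_index i p < swap_index i q.
Proof. by rewrite /swap_index; (repeat case: ifP => /eqP ?); rewrite /= ?andbT ?andbF; lia. Qed.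

Lemma swap_index_ltW i p q : 0 < i -> swap_index i p < swap_index i q ->
  (p < q) || ((p == i) && (q == i.-1)).
Proof. by rewrite /swap_index; (repeat case: ifP => /eqP ?); lia. Qed.

Lemma size_swap_pos s i : size (swap_pos s i) = size s.
Proof. by rewrite /swap_pos size_map size_iota. Qed.

Lemma nth_swap_pos s i j : j < size s -> nth 0 (swap_pos s i) j = nth 0 s (swap_index i j).
Proof. by move=> j_lt; rewrite /swap_pos (nth_map 0) ?size_iota // nth_iota. Qed.

Lemma swap_posK s i : 0 < i < size s -> swap_pos (swap_pos s i) i = s.
Proof.
move=> i_range; apply: (@eq_from_nth _ 0); rewrite ?size_swap_pos // => j j_lt.
rewrite !nth_swap_pos ?size_swap_pos ?swap_index_lt // swap_indexK //.
by case/andP: i_range.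
Qed.

Lemma map_swap_pos f s i : 0 < i < size s -> swap_pos (map f s) i = map f (swap_pos s i).
Proof.
move=> i_range; apply: (@eq_from_nth _ 0) => [|j]; first by rewrite !(size_swap_pos, size_map).
rewrite size_swap_pos size_map => j_lt.
rewrite nth_swap_pos ?size_map // (nth_map 0) ?swap_index_lt //.
by rewrite (nth_map 0) ?size_swap_pos // nth_swap_pos.
Qed.

Lemma mem_swap_pos s i : 0 < i < size s -> {subset swap_pos s i <= s}.
Proof.
move=> i_range x /(nthP 0) [j]; rewrite size_swap_pos => j_lt <-.
by rewrite nth_swap_pos // mem_nth // swap_index_lt.
Qed.

Definition word_on (m : nat) (u : seq nat) : bool := all (fun a => 0 < a < m) u.

Lemma size_foldl_swap_pos s u : size (foldl swap_pos s u) = size s.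
Proof. by elim: u s => //= a u IHu s; rewrite IHu size_swap_pos. Qed.

Lemma map_foldl_swap_pos f s u : word_on (size s) u ->
  foldl swap_pos (map f s) u = map f (foldl swap_pos s u).
Proof.
elim: u s => //= a u IHu s /andP[a_range u_on].
by rewrite map_swap_pos // IHu // size_swap_pos.
Qed.

Lemma foldl_swap_posK s u : word_on (size s) u ->
  foldl swap_pos (foldl swap_pos s u) (rev u) = s.
Proof.
elim/last_ind: u => //= u a IHu.
rewrite /word_on all_rcons => /andP[a_range u_on].
by rewrite foldl_rcons rev_rcons /= swap_posK ?size_foldl_swap_pos // IHu.
Qed.

Lemma mem_foldl_swap_pos s u : word_on (size s) u -> {subset foldl swap_pos s u <= s}.
Proof.
elim: u s => [|a u IHu] s /=; first by move=> _ x.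
move=> /andP[a_range u_on] x /IHu x_in; apply: (mem_swap_pos a_range).
by apply: x_in; rewrite size_swap_pos.
Qed.

Definition inversions (s : seq nat) : nat :=
  \sum_(p < size s) \sum_(q < size s) ((p < q) && (nth 0 s q < nth 0 s p)).

Definition ascent_at (s : seq nat) (i : nat) : bool := nth 0 s i.-1 < nth 0 s i.

Lemma sum_pair_indicator m i j (c : bool) : i < m -> j < m ->
  \sum_(p < m) \sum_(q < m) [&& p == i :> nat, q == j :> nat & c] = c.
Proof.
move=> i_lt j_lt.
transitivity (\sum_(p < m | p == i :> nat) \sum_(q < m | q == j :> nat) (c : nat)).
  rewrite [RHS]big_mkcond; apply: eq_bigr => p _; rewrite [in RHS]big_mkcond /=.
  case: eqP => _ /=; last by rewrite big1.
  by apply: eq_bigr => q _; case: eqP.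
by rewrite !(big_ord1_eq _ (fun _ => _)) i_lt j_lt.
Qed.

(* Reindexing by [swap_index i], the only pair whose order changes is (i-1, i). *)
Lemma inversions_swap_pos s i : 0 < i < size s ->
  inversions (swap_pos s i) <= inversions s + ascent_at s i.
Proof.
move=> i_range; have i_gt0 : 0 < i by case/andP: i_range.
rewrite /inversions size_swap_pos; set m := size s.
pose T (p : 'I_m) : 'I_m := Ordinal (swap_index_lt i_range (ltn_ord p)).
have T_inj : injective T.
  by move=> p q /(congr1 val) /(congr1 (swap_index i)) /=; rewrite !swap_indexK //; apply: ord_inj.
under eq_bigr => p _ do under eq_bigr => q _ do rewrite !nth_swap_pos //.
rewrite (reindex_inj T_inj) /=.
under eq_bigr => p _ do rewrite (reindex_inj T_inj) /=.
under eq_bigr => p _ do under eq_bigr => q _ do rewrite !swap_indexK //.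
have [i_lt pred_lt] : i < m /\ i.-1 < m by split; lia.
rewrite -(sum_pair_indicator (ascent_at s i) i_lt pred_lt) -big_split /=.
apply: leq_sum => p _; rewrite -big_split /=; apply: leq_sum => q _.
case swapped: (swap_index i p < swap_index i q) => //=.
case/orP: (swap_index_ltW i_gt0 swapped) => [-> | /andP[/eqP -> /eqP ->]].
  exact: leq_addr.
by rewrite /ascent_at !eqxx leq_addl.
Qed.

Lemma sum_ord_lt m : \sum_(p < m) \sum_(q < m) (p < q) = 'C(m, 2).
Proof.
elim: m => [|m IHm]; first by rewrite big_ord0.
rewrite big_ord_recr /= [X in _ + X]big1 ?addn0; last first.
  by move=> q _; have := ltn_ord q; rewrite ltnS leqNgt => /negPf ->.
under eq_bigr => p _ do rewrite big_ord_recr /= ltn_ord.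
by rewrite big_split /= IHm sum1_card card_ord binS bin1.
Qed.

Lemma nth_id_perm n p : p < n -> nth 0 (id_perm n) p = p.+1.
Proof. by move=> p_lt; rewrite /id_perm nth_iota. Qed.

Lemma nth_w0_perm n p : p < n -> nth 0 (w0_perm n) p = n - p.
Proof. by move=> p_lt; rewrite /w0_perm nth_rev size_iota // nth_iota; lia. Qed.

Lemma inversions_id_perm n : inversions (id_perm n) = 0.
Proof.
rewrite /inversions big1 // => p _; rewrite big1 // => q _.
by rewrite /id_perm size_iota in p q *; rewrite !nth_id_perm //; lia.
Qed.

Lemma inversions_w0_perm n : inversions (w0_perm n) = 'C(n, 2).
Proof.
rewrite /inversions -sum_ord_lt /w0_perm size_rev size_iota; apply: eq_bigr => p _.
apply: eq_bigr => q _; rewrite -/(w0_perm n) !nth_w0_perm //.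
by have := ltn_ord q; case: ltnP => //= p_lt_q q_lt; lia.
Qed.

Definition complement (n : nat) (s : seq nat) : seq nat := map (fun v => n.+1 - v) s.

Lemma complement_id_perm n : complement n (id_perm n) = w0_perm n.
Proof.
apply: (@eq_from_nth _ 0); first by rewrite size_map /id_perm /w0_perm size_rev.
rewrite size_map /id_perm size_iota => p p_lt.
by rewrite (nth_map 0) ?size_iota // -/(id_perm n) nth_id_perm // nth_w0_perm //; lia.
Qed.

Lemma complement_w0_perm n : complement n (w0_perm n) = id_perm n.
Proof.
apply: (@eq_from_nth _ 0); first by rewrite size_map /id_perm /w0_perm size_rev.
rewrite size_map /w0_perm size_rev size_iota => p p_lt.
rewrite (nth_map 0) ?size_rev ?size_iota // -/(w0_perm n).
by rewrite nth_id_perm // nth_w0_perm //; lia.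
Qed.

Definition contains132 (s : seq nat) : Prop := exists p1 p2 p3,
  [/\ p1 < p2, p2 < p3, p3 < size s & nth 0 s p1 < nth 0 s p3 < nth 0 s p2].

Definition contains312 (s : seq nat) : Prop := exists p1 p2 p3,
  [/\ p1 < p2, p2 < p3, p3 < size s & nth 0 s p2 < nth 0 s p3 < nth 0 s p1].

Lemma avoids132E s : avoids132 s <-> ~ contains132 s.
Proof.
split=> [/forallP avoid [p1 [p2 [p3 [lt12 lt23 p3_lt pat]]]] | no132].
  have [p1_lt p2_lt] : p1 < size s /\ p2 < size s by split; lia.
  move: (avoid (Ordinal p1_lt)) => /forallP /(_ (Ordinal p2_lt)).
  by move=> /forallP /(_ (Ordinal p3_lt)) /=; rewrite lt12 lt23 pat.
apply/forallP => i; apply/forallP => j; apply/forallP => k.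
apply/implyP => /andP[ltij ltjk]; apply/negP => pat; apply: no132.
by exists i, j, k.
Qed.

Lemma id_perm_no132 n : ~ contains132 (id_perm n).
Proof.
move=> [p1 [p2 [p3 [lt12 lt23 p3_lt]]]]; rewrite /id_perm size_iota in p3_lt.
by rewrite !nth_id_perm //; lia.
Qed.

Lemma id_perm_no312 n : ~ contains312 (id_perm n).
Proof.
move=> [p1 [p2 [p3 [lt12 lt23 p3_lt]]]]; rewrite /id_perm size_iota in p3_lt.
by rewrite !nth_id_perm //; lia.
Qed.

Section IntermediatePermutations.
Variables (n : nat) (w : seq nat).
Hypothesis w_on : word_on n w.

Lemma size_inter_perm k : size (inter_perm n w k) = n.
Proof. by rewrite /inter_perm size_foldl_swap_pos /id_perm size_iota. Qed.

Lemma inter_perm0 : inter_perm n w 0 = id_perm n.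
Proof. by rewrite /inter_perm take0. Qed.

Lemma inter_permS k : k < size w ->
  inter_perm n w k.+1 = swap_pos (inter_perm n w k) (nth 0 w k).
Proof. by move=> k_lt; rewrite /inter_perm (take_nth 0 k_lt) foldl_rcons. Qed.

Lemma nth_word_on k : k < size w -> 0 < nth 0 w k < n.
Proof. by move=> k_lt; move/allP: w_on; apply; apply: mem_nth. Qed.

Lemma nth_inter_perm_le k p : nth 0 (inter_perm n w k) p <= n.
Proof.
have [p_lt|p_ge] := ltnP p (size (inter_perm n w k)); last by rewrite nth_default.
have take_on : word_on (size (id_perm n)) (take k w).
  by rewrite /id_perm size_iota; apply/allP => x /mem_take; apply: (allP w_on).
move: (mem_nth 0 p_lt) => /(mem_foldl_swap_pos take_on).
by rewrite /id_perm mem_iota add1n ltnS => /andP[].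
Qed.

Lemma inversions_inter_perm k : k <= size w ->
  inversions (inter_perm n w k) + \sum_(j < k) ~~ ascent_at (inter_perm n w j) (nth 0 w j) <= k.
Proof.
elim: k => [|k IHk] k_le; first by rewrite inter_perm0 inversions_id_perm big_ord0.
have := inversions_swap_pos (s := inter_perm n w k) (i := nth 0 w k).
rewrite size_inter_perm big_ord_recr /= inter_permS // => /(_ (nth_word_on k_le)).
by have := IHk (ltnW k_le); case: ascent_at => /=; lia.
Qed.

(* Every step adds at most one inversion and a descent step adds none; reaching w0,
   with its 'C(n, 2) inversions, in 'C(n, 2) steps leaves no room for a descent. *)
Lemma sorting_network_ascent k : sorting_network n w -> k < size w ->
  ascent_at (inter_perm n w k) (nth 0 w k).
Proof.
case=> size_w _ final k_lt.
have := inversions_inter_perm (leqnn (size w)); rewrite final inversions_w0_perm -size_w.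
by rewrite (bigD1 (Ordinal k_lt)) //=; case: ascent_at => //=; lia.
Qed.

Lemma contains312_inter_perm j : sorting_network n w -> j <= size w ->
  contains312 (inter_perm n w j) -> exists2 m, 0 < m <= j & contains132 (inter_perm n w m).
Proof.
move=> net; elim: j => [|j IHj] j_lt; first by rewrite inter_perm0 => /id_perm_no312.
have /andP[i_gt0 i_lt] := nth_word_on j_lt; set i := nth 0 w j in i_gt0 i_lt *.
move=> [p1 [p2 [p3 [lt12 lt23 p3_lt]]]]; rewrite size_inter_perm in p3_lt.
rewrite inter_permS // !nth_swap_pos ?size_inter_perm; try lia.
rewrite -/i => pat.
have [/andP[/eqP p1E /eqP p2E] | not_first] := boolP ((p1 == i.-1) && (p2 == i)).
  subst p1 p2; rewrite swap_index_pred swap_index_self // swap_index_out in pat; try (apply/eqP; lia).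
  have pat132 : contains132 (inter_perm n w j).
    by exists i.-1, i, p3; split; rewrite ?size_inter_perm; try lia.
  have [j0|j_gt0] := posnP j; last by exists j => //; lia.
  by move: pat132; rewrite j0 inter_perm0 => /id_perm_no132.
have [/andP[/eqP p2E /eqP p3E] | not_second] := boolP ((p2 == i.-1) && (p3 == i)).
  subst p2 p3; rewrite swap_index_pred swap_index_self // in pat.
  by have := sorting_network_ascent net j_lt; rewrite /ascent_at -/i; lia.
have [|m m_range pat132] := IHj (ltnW j_lt).
  exists (swap_index i p1), (swap_index i p2), (swap_index i p3).
  split; rewrite ?size_inter_perm ?swap_index_mono ?swap_index_lt ?i_gt0 //.
by exists m => //; lia.
Qed.

End IntermediatePermutations.

Section ReversedWord.
Variables (n : nat) (w : seq nat).
Hypotheses (w_on : word_on n w) (net : sorting_network n w).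

Lemma foldl_inter_perm_drop k : foldl swap_pos (inter_perm n w k) (drop k w) = w0_perm n.
Proof.
case: net => _ _; rewrite /inter_perm take_size => <-.
by rewrite -foldl_cat cat_take_drop.
Qed.

Lemma inter_perm_rev k : k <= size w ->
  inter_perm n w (size w - k) = complement n (inter_perm n (rev w) k).
Proof.
move=> k_le; set s := inter_perm n w (size w - k).
have drop_on : word_on (size s) (drop (size w - k) w).
  by rewrite size_inter_perm; apply/allP => x /mem_drop; apply: (allP w_on).
rewrite -[s](foldl_swap_posK drop_on) foldl_inter_perm_drop -complement_id_perm.
rewrite map_foldl_swap_pos; last first.
  by rewrite /id_perm size_iota; apply/allP => x; rewrite mem_rev => /mem_drop; apply: (allP w_on).
by rewrite /inter_perm take_rev.
Qed.

Lemma sorting_network_rev : sorting_network n (rev w).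
Proof.
have [size_w _ final] := net.
split; [by rewrite size_rev | by rewrite all_rev |].
have {}final : foldl swap_pos (id_perm n) w = w0_perm n.
  by move: final; rewrite /inter_perm take_size.
rewrite /inter_perm take_size -complement_w0_perm map_foldl_swap_pos; last first.
  by rewrite /w0_perm size_rev size_iota /word_on all_rev.
rewrite -{1}final foldl_swap_posK; first exact: complement_id_perm.
by rewrite /id_perm size_iota.
Qed.

End ReversedWord.

Lemma avoiding132_sorting_network_rev n w :
  avoiding132_sorting_network n w -> avoiding132_sorting_network n (rev w).
Proof.
case=> net avoid; have w_on : word_on n w by case: net.
have w_on' : word_on n (rev w) by rewrite /word_on all_rev.
split=> [|k]; first exact: sorting_network_rev.
rewrite size_rev => /andP[k_gt0 k_le]; apply/avoids132E.
move=> [p1 [p2 [p3 [lt12 lt23 p3_lt pat]]]]; rewrite size_inter_perm in p3_lt.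
have pat312 : contains312 (inter_perm n w (size w - k)).
  rewrite inter_perm_rev //; exists p1, p2, p3.
  split; rewrite ?size_map ?size_inter_perm // !(nth_map 0) ?size_inter_perm; try lia.
  by have := nth_inter_perm_le w_on' k p2; have := nth_inter_perm_le w_on' k p3; lia.
have [m m_range] := contains312_inter_perm w_on net (leq_subr _ _) pat312.
by apply/avoids132E; apply: avoid; lia.
Qed.

Theorem mainTheorem1 (n : nat) (w : seq nat) :
  2 <= n -> size w = 'C(n, 2) -> all (fun a => 0 < a < n) w ->
  (avoiding132_sorting_network n w <-> avoiding132_sorting_network n (rev w)).
Proof.
move=> _ _ _; split; first exact: avoiding132_sorting_network_rev.
by move/avoiding132_sorting_network_rev; rewrite revK.
Qed.
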